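(* Let $V$ be an upper probability on $(\Omega,\mathcal{F})$ that is continuous from below, and let $\theta:\Omega\to\Omega$ be a measurable map preserving $V$ (i.e. $V(\theta^{-1}A)=V(A)$ for all $A\in\mathcal{F}$). Consider the statements: (i) $\theta$ is ergodic with respect to $V$; (ii) for every $B\in\mathcal{F}$ with $V(\theta^{-1}B\,\triangle\, B)=0$, we have $V(B)=0$ or $V(B^c)=0$; (iii) for every $A\in\mathcal{F}$ with $V(A)>0$, $V\big(\big(\bigcup_{n=1}^{\infty}\theta^{-n}A\big)^{c}\big)=0$; (iv) for all $A,B\in\mathcal{F}$ with $V(A)>0$ and $V(B)>0$ there exists $n\in\mathbb{N}$ with $V(\theta^{-n}A\cap B)>0$. Then (i) and (ii) are equivalent, (iii) implies (iv), and (iv) implies (i). Moreover, if $V$ is continuous, then (ii) implies (iii), so all four statements are equivalent.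
   Context: $\Delta(\Omega,\mathcal{F})$ denotes the set of finitely additive probabilities on $\mathcal{F}$. An upper probability is a set function $V(A)=\sup_{P\in\mathcal{P}}P(A)$, $A\in\mathcal{F}$, for some nonempty $\mathcal{P}\subseteq\Delta(\Omega,\mathcal{F})$. $V$ is continuous from below if $V(A_n)\to V(A)$ whenever $A_n\uparrow A$, and continuous if in addition $V(A_n)\to V(A)$ whenever $A_n\downarrow A$. A set $B\in\mathcal{F}$ is $\theta$-invariant if $\theta^{-1}B=B$. For a capacity $\mu$ (a monotone set function $\mathcal{F}\to[0,1]$ with $\mu(\emptyset)=0,\mu(\Omega)=1$) preserved by $\theta$, $\theta$ is ergodic with respect to $\mu$ if for every $\theta$-invariant set $B$: $\mu(B)\in\{0,1\}$, and $\mu(B)=0$ or $\mu(B^c)=0$. *)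

From HB Require Import structures.
From mathcomp Require Import all_boot all_order all_algebra.
From mathcomp Require Import all_classical all_reals all_analysis.
Set Implicit Arguments. Unset Strict Implicit. Unset Printing Implicit Defensive.
Import Order.TTheory GRing.Theory Num.Theory.
Import numFieldNormedType.Exports.
Local Open Scope classical_set_scope.
Local Open Scope ring_scope.

Section Defs.
Context {d : measure_display} {T : measurableType d} {R : realType}.

Definition fa_prob (P : set T -> R) : Prop :=
  (forall A, measurable A -> 0 <= P A) /\
  P setT = 1 /\
  (forall A B, measurable A -> measurable B -> A `&` B = set0 ->
     P (A `|` B) = P A + P B).

Definition upper_probability (V : set T -> R) : Prop :=
  exists Ps : set (set T -> R),
    Ps !=set0 /\ (forall P, Ps P -> fa_prob P) /\
    (forall A, measurable A -> V A = sup [set P A | P in Ps]).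

Definition cont_from_below (V : set T -> R) : Prop :=
  forall (An : nat -> set T) (A : set T),
    (forall n, measurable (An n)) -> measurable A ->
    (forall n, An n `<=` An n.+1) -> \bigcup_n An n = A ->
    (fun n => V (An n)) @ \oo --> V A.

Definition cont_from_above (V : set T -> R) : Prop :=
  forall (An : nat -> set T) (A : set T),
    (forall n, measurable (An n)) -> measurable A ->
    (forall n, An n.+1 `<=` An n) -> \bigcap_n An n = A ->
    (fun n => V (An n)) @ \oo --> V A.

Definition continuous_capacity (V : set T -> R) : Prop :=
  cont_from_below V /\ cont_from_above V.

Definition preserves (theta : T -> T) (V : set T -> R) : Prop :=
  forall A, measurable A -> V (theta @^-1` A) = V A.

Definition invariant (theta : T -> T) (B : set T) : Prop :=
  theta @^-1` B = B.

Definition ergodic (theta : T -> T) (mu : set T -> R) : Prop :=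
  forall B, measurable B -> invariant theta B ->
    (mu B = 0 \/ mu B = 1) /\ (mu B = 0 \/ mu (~` B) = 0).

Definition symdiff (A B : set T) : set T := (A `\` B) `|` (B `\` A).

Definition cond_ii (theta : T -> T) (V : set T -> R) : Prop :=
  forall B, measurable B -> V (symdiff (theta @^-1` B) B) = 0 ->
    V B = 0 \/ V (~` B) = 0.

Definition cond_iii (theta : T -> T) (V : set T -> R) : Prop :=
  forall A, measurable A -> 0 < V A ->
    V (~` \bigcup_(n in [set n : nat | (0 < n)%N]) (iter n theta @^-1` A)) = 0.

Definition cond_iv (theta : T -> T) (V : set T -> R) : Prop :=
  forall A B, measurable A -> measurable B -> 0 < V A -> 0 < V B ->
    exists n : nat, (0 < n)%N /\ 0 < V ((iter n theta @^-1` A) `&` B).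

End Defs.

From Pilot Require Import Defs.
From mathcomp Require Import all_boot all_order all_algebra.
From mathcomp Require Import all_classical all_reals all_analysis.
From mathcomp Require Import lra.
Set Implicit Arguments. Unset Strict Implicit. Unset Printing Implicit Defensive.
Import Order.TTheory GRing.Theory Num.Theory.
Import numFieldNormedType.Exports.
Local Open Scope classical_set_scope.
Local Open Scope ring_scope.

(* The invariant sets that do the work are the sets [visits_infinitely A] of
   points whose orbit enters A infinitely often.  Besides monotonicity and
   subadditivity, V has V A = 1 whenever V (~` A) = 0 (it dominates a
   finitely additive probability), and, being continuous from below, makes
   countable unions of null sets null.
   (i) -> (ii): off the null set of points whose orbit ever meets
   [symdiff (theta @^-1` B) B], B lies in the invariant set
   [visits_infinitely B] and its complement in the complement of that set.
   (ii) -> (iii): by continuity from above and invariance of V,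
   [visits_infinitely A] has the capacity of the union of all theta^-n A,
   which is at least V A > 0, so its complement is null.
   (iii) -> (iv): B is covered by the complement of the union of the
   theta^-n A (n >= 1) and the union of the sets theta^-n A `&` B.
   (iv) -> (i): apply (iv) to an invariant set and its complement. *)

Section fa_prob.
Context {d : measure_display} {T : measurableType d} {R : realType}.
Variable P : set T -> R.
Hypothesis hP : fa_prob P.

Lemma fa_prob0 : P set0 = 0.
Proof.
case: hP => _ [_ PU].
have := PU set0 set0 measurable0 measurable0 (setI0 _).
rewrite setU0; lra.
Qed.

Lemma fa_prob_le A B : measurable A -> measurable B -> A `<=` B -> P A <= P B.
Proof.
move=> mA mB AB; case: hP => P_ge0 [_ PU].
have mBA : measurable (B `\` A) by exact: measurableD.
rewrite -(setDUK AB) PU //; last by rewrite setDE setICA setICr setI0.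
by rewrite lerDl P_ge0.
Qed.

Lemma fa_prob_le1 A : measurable A -> P A <= 1.
Proof. by move=> mA; case: hP => _ [<- _]; exact: fa_prob_le. Qed.

Lemma fa_probU2 A B : measurable A -> measurable B -> P (A `|` B) <= P A + P B.
Proof.
move=> mA mB; case: hP => _ [_ PU].
have mBA : measurable (B `\` A) by exact: measurableD.
have -> : A `|` B = A `|` (B `\` A) by rewrite setDE setUIr setUv setIT.
rewrite PU //; last by rewrite setDE setICA setICr setI0.
by rewrite lerD2l fa_prob_le.
Qed.

Lemma fa_probC A : measurable A -> P A + P (~` A) = 1.
Proof.
move=> mA; case: hP => _ [P1 PU].
by rewrite -PU ?setUv ?setICr //; exact: measurableC.
Qed.

End fa_prob.

Section upper_probability.
Context {d : measure_display} {T : measurableType d} {R : realType}.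

Lemma fa_prob_le_sup (Ps : set (set T -> R)) P A :
  (forall Q, Ps Q -> fa_prob Q) -> Ps P -> measurable A ->
  P A <= sup [set Q A | Q in Ps].
Proof.
move=> PsP PsP0 mA; apply: ub_le_sup; last by exists P.
by exists 1 => _ [Q PsQ <-]; exact: (fa_prob_le1 (PsP _ PsQ) mA).
Qed.

Lemma sup_eval_le (Ps : set (set T -> R)) A x : Ps !=set0 ->
  (forall P, Ps P -> P A <= x) -> sup [set P A | P in Ps] <= x.
Proof.
move=> [P PsP0] Ax.
by apply: ge_sup => [|_ [Q PsQ <-]]; [exists (P A), P | exact: Ax].
Qed.

Variable V : set T -> R.
Hypothesis hV : upper_probability V.

Lemma upper_prob_ge0 A : measurable A -> 0 <= V A.
Proof.
move=> mA; case: hV => Ps [[P PsP0] [PsP ->]] //.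
apply: le_trans (fa_prob_le_sup PsP PsP0 mA).
by case: (PsP _ PsP0) => + _; apply.
Qed.

Lemma upper_prob0 : V set0 = 0.
Proof.
apply/eqP; rewrite eq_le upper_prob_ge0 // andbT.
case: hV => Ps [Ps0 [PsP ->]] //; apply: sup_eval_le => // P PsP0.
by rewrite fa_prob0 //; exact: PsP.
Qed.

Lemma upper_prob_le A B : measurable A -> measurable B -> A `<=` B ->
  V A <= V B.
Proof.
move=> mA mB AB; case: hV => Ps [Ps0 [PsP VE]]; rewrite !VE //.
apply: sup_eval_le => // P PsP0.
apply: le_trans (fa_prob_le_sup PsP PsP0 mB).
exact: (fa_prob_le (PsP _ PsP0) mA mB AB).
Qed.

Lemma upper_probU2 A B : measurable A -> measurable B ->
  V (A `|` B) <= V A + V B.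
Proof.
move=> mA mB; case: hV => Ps [Ps0 [PsP VE]].
rewrite !VE //; last exact: measurableU.
apply: sup_eval_le => // P PsP0.
apply: le_trans (fa_probU2 (PsP _ PsP0) mA mB) _.
by apply: lerD; exact: fa_prob_le_sup.
Qed.

Lemma upper_prob_le1 A : measurable A -> V A <= 1.
Proof.
move=> mA; case: hV => Ps [Ps0 [PsP ->]] //; apply: sup_eval_le => // P PsP0.
exact: (fa_prob_le1 (PsP _ PsP0) mA).
Qed.

Lemma upper_probC_ge1 A : measurable A -> 1 <= V A + V (~` A).
Proof.
move=> mA; case: hV => Ps [[P PsP0] [PsP VE]].
rewrite -(fa_probC (PsP _ PsP0) mA) !VE //; last exact: measurableC.
by apply: lerD; apply: fa_prob_le_sup => //; exact: measurableC.
Qed.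

Lemma upper_prob_conull A : measurable A -> V (~` A) = 0 -> V A = 1.
Proof.
move=> mA VCA; apply/eqP; rewrite eq_le upper_prob_le1 //=.
by have := upper_probC_ge1 mA; rewrite VCA addr0.
Qed.

Lemma upper_prob_eq0_or_gt0 A : measurable A -> V A = 0 \/ 0 < V A.
Proof.
by move=> mA; have := upper_prob_ge0 mA; rewrite le_eqVlt => /orP [/eqP <-|];
  [left|right].
Qed.

Lemma upper_prob_null_le A B : measurable A -> measurable B -> A `<=` B ->
  V B = 0 -> V A = 0.
Proof.
move=> mA mB AB VB; apply/eqP; rewrite eq_le upper_prob_ge0 // andbT.
by rewrite -VB upper_prob_le.
Qed.

Lemma upper_prob_nullU A B : measurable A -> measurable B ->
  V A = 0 -> V B = 0 -> V (A `|` B) = 0.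
Proof.
move=> mA mB VA VB; apply/eqP; rewrite eq_le upper_prob_ge0 ?andbT;
  last exact: measurableU.
by have := upper_probU2 mA mB; rewrite VA VB addr0.
Qed.

Lemma upper_prob_null_bigsetU (F : nat -> set T) n :
  (forall k, measurable (F k)) -> (forall k, V (F k) = 0) ->
  V (\big[setU/set0]_(k < n) F k) = 0.
Proof.
move=> mF VF; elim: n => [|n IH]; first by rewrite big_ord0 upper_prob0.
rewrite big_ord_recr /=; apply: upper_prob_nullU => //.
exact: bigsetU_measurable.
Qed.

Lemma upper_prob_null_subU A B C : measurable A -> measurable B ->
  measurable C -> A `<=` B `|` C -> V B = 0 -> V C = 0 -> V A = 0.
Proof.
move=> mA mB mC ABC VB VC; apply: upper_prob_null_le ABC _ => //.
  exact: measurableU.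
exact: upper_prob_nullU.
Qed.

Hypothesis Vbelow : cont_from_below V.

Lemma upper_prob_null_bigcup (F : nat -> set T) :
  (forall k, measurable (F k)) -> (forall k, V (F k) = 0) ->
  V (\bigcup_k F k) = 0.
Proof.
move=> mF VF.
pose G n := \big[setU/set0]_(k < n) F k.
have mG n : measurable (G n) by apply: bigsetU_measurable => k _.
have G_incr n : G n `<=` G n.+1 by rewrite /G big_ord_recr /=; exact: subsetUl.
have GE : \bigcup_n G n = \bigcup_k F k.
  apply/seteqP; split => x.
    by move=> [n _]; rewrite /G -bigcup_mkord => -[k _ Fk]; exists k.
  move=> [k _ Fk]; exists k.+1 => //.
  by rewrite /G -bigcup_mkord; exists k => //=.
have := Vbelow mG (bigcupT_measurable _ mF) G_incr GE.
rewrite (_ : (fun n => V (G n)) = cst 0); last first.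
  by apply: funext => n; exact: upper_prob_null_bigsetU.
by move=> h; exact: (cvg_unique _ h (cvg_cst 0)).
Qed.

End upper_probability.

Section ergodicity.
Context {d : measure_display} {T : measurableType d} {R : realType}.
Variables (V : set T -> R) (theta : T -> T).
Hypotheses (hV : upper_probability V) (mtheta : measurable_fun setT theta).
Hypotheses (Vtheta : preserves theta V) (Vbelow : cont_from_below V).

Lemma preimage_iterS n A :
  iter n.+1 theta @^-1` A = theta @^-1` (iter n theta @^-1` A).
Proof.
by rewrite (_ : iter n.+1 theta = iter n theta \o theta) // funeqE => x;
  rewrite iterSr.
Qed.

Lemma measurable_preimage_iter n A : measurable A ->
  measurable (iter n theta @^-1` A).
Proof.
move=> mA; elim: n => [//|n IH]; rewrite preimage_iterS.
by have := mtheta measurableT IH; rewrite setTI.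
Qed.

Lemma preserves_iter n A : measurable A -> V (iter n theta @^-1` A) = V A.
Proof.
move=> mA; elim: n => [//|n IH].
by rewrite preimage_iterS Vtheta ?IH //; exact: measurable_preimage_iter.
Qed.

Lemma invariant_preimage_iter n B : Defs.invariant theta B ->
  iter n theta @^-1` B = B.
Proof. by move=> iB; elim: n => [//|n IH]; rewrite preimage_iterS IH iB. Qed.

Lemma symdiff_invariant B : Defs.invariant theta B ->
  symdiff (theta @^-1` B) B = set0.
Proof. by move=> ->; rewrite /symdiff setDv setU0. Qed.

Lemma ergodic_null_or_conull :
  (forall B, measurable B -> Defs.invariant theta B ->
    V B = 0 \/ V (~` B) = 0) ->
  ergodic theta V.
Proof.
move=> h B mB iB; case: (h B mB iB) => VB; first by split; left.
by split; right => //; exact: (upper_prob_conull hV).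
Qed.

Definition visits_after m A := \bigcup_n (iter (n + m) theta @^-1` A).

Definition visits_infinitely A := \bigcap_m visits_after m A.

Lemma measurable_visits_after m A : measurable A ->
  measurable (visits_after m A).
Proof.
by move=> mA; apply: bigcupT_measurable => n; exact: measurable_preimage_iter.
Qed.

Lemma measurable_visits_infinitely A : measurable A ->
  measurable (visits_infinitely A).
Proof.
by move=> mA; apply: bigcapT_measurable => m; exact: measurable_visits_after.
Qed.

Lemma visits_afterE m A :
  visits_after m A = iter m theta @^-1` visits_after 0 A.
Proof.
by apply/seteqP; split => x /= [n _ hn]; exists n => //;
  move: hn; rewrite /= addn0 iterD.
Qed.

Lemma visits_after_decr m A : visits_after m.+1 A `<=` visits_after m A.
Proof. by move=> x [n _ hn]; exists n.+1 => //; rewrite addSnnS. Qed.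

Lemma visits_infinitely_invariant A :
  Defs.invariant theta (visits_infinitely A).
Proof.
apply/seteqP; split => x /= h m _.
  by have [n _ hn] := h m I; exists n.+1 => //; move: hn; rewrite /= -iterSr.
by have [n _ hn] := h m.+1 I; exists n => //; move: hn; rewrite /= addnS iterSr.
Qed.

Lemma iter_mem_off_symdiff B x :
  ~ (\bigcup_k iter k theta @^-1` symdiff (theta @^-1` B) B) x ->
  forall n, B (iter n theta x) <-> B x.
Proof.
move=> Nx; elim=> [//|n <-].
have {}Nx : ~ symdiff (theta @^-1` B) B (iter n theta x).
  by move=> ?; apply: Nx; exists n.
rewrite iterS; split => h; apply: contrapT => h'; apply: Nx.
  by left; split; [exact: h | exact: h'].
by right; split; [exact: h | exact: h'].
Qed.

Lemma ergodic_cond_ii : ergodic theta V -> cond_ii theta V.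
Proof.
move=> erg B mB VD.
set D := symdiff (theta @^-1` B) B.
have mD : measurable D.
  have mB' : measurable (theta @^-1` B) by exact: (measurable_preimage_iter 1).
  by apply: measurableU; exact: measurableD.
set N := \bigcup_k iter k theta @^-1` D.
have mN : measurable N.
  by apply: bigcupT_measurable => k; exact: measurable_preimage_iter.
have VN : V N = 0.
  apply: (upper_prob_null_bigcup hV Vbelow) => // k.
    exact: measurable_preimage_iter.
  by rewrite preserves_iter.
have mI := measurable_visits_infinitely mB.
have B_sub : B `<=` visits_infinitely B `|` N.
  move=> x Bx; have [Nx|Nx] := pselect (N x); [by right|left].
  by move=> m _; exists 0 => //; apply/(iter_mem_off_symdiff Nx).
have CB_sub : ~` B `<=` ~` visits_infinitely B `|` N.
  move=> x nBx; have [Nx|Nx] := pselect (N x); [by right|left].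
  by move=> IBx; apply: nBx; have [n _ /iter_mem_off_symdiff] := IBx 0 I; apply.
have [VI|VCI] := (erg _ mI (visits_infinitely_invariant B)).2; [left|right].
  exact: (upper_prob_null_subU hV mB mI mN B_sub).
exact: (upper_prob_null_subU hV (measurableC mB) (measurableC mI) mN CB_sub).
Qed.

Lemma cond_ii_invariant B : cond_ii theta V -> measurable B ->
  Defs.invariant theta B -> V B = 0 \/ V (~` B) = 0.
Proof.
move=> hii mB iB; apply: hii => //.
by rewrite symdiff_invariant // (upper_prob0 hV).
Qed.

Lemma cond_ii_ergodic : cond_ii theta V -> ergodic theta V.
Proof.
by move=> hii; apply: ergodic_null_or_conull => B; exact: cond_ii_invariant.
Qed.

Lemma cond_iv_ergodic : cond_iv theta V -> ergodic theta V.
Proof.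
move=> hiv; apply: ergodic_null_or_conull => B mB iB.
have mCB := measurableC mB.
case: (upper_prob_eq0_or_gt0 hV mB) => [|VB]; first by left.
case: (upper_prob_eq0_or_gt0 hV mCB) => [|VCB]; first by right.
have [n [_]] := hiv B (~` B) mB mCB VB VCB.
by rewrite invariant_preimage_iter // setICr (upper_prob0 hV) // ltxx.
Qed.

Lemma cond_iii_iv : cond_iii theta V -> cond_iv theta V.
Proof.
move=> hiii A B mA mB VA VB; apply: contrapT => hne.
have mAB k : measurable (iter k.+1 theta @^-1` A `&` B).
  by apply: measurableI => //; exact: measurable_preimage_iter.
have VAB k : V (iter k.+1 theta @^-1` A `&` B) = 0.
  have [//|VABk] := upper_prob_eq0_or_gt0 hV (mAB k).
  by exfalso; apply: hne; exists k.+1.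
set U := \bigcup_(n in [set n : nat | (0 < n)%N]) (iter n theta @^-1` A).
have mU : measurable U.
  by apply: bigcup_measurable => k _; exact: measurable_preimage_iter.
have B_sub : B `<=` ~` U `|` \bigcup_k (iter k.+1 theta @^-1` A `&` B).
  move=> x Bx; have [Ux|Ux] := pselect (U x); [right|by left].
  by case: Ux => -[//|k] _ Akx; exists k.
suff VB0 : V B = 0 by move: VB; rewrite VB0 ltxx.
apply: (upper_prob_null_subU hV mB (measurableC mU) _ B_sub).
- exact: bigcupT_measurable.
- exact: hiii.
- exact: (upper_prob_null_bigcup hV Vbelow).
Qed.

Lemma cond_ii_iii : cont_from_above V -> cond_ii theta V -> cond_iii theta V.
Proof.
move=> Vabove hii A mA VA.
have mI := measurable_visits_infinitely mA.
have mU m := measurable_visits_after m mA.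
have VI : V (visits_infinitely A) = V (visits_after 0 A).
  have := Vabove _ _ mU mI (fun m => @visits_after_decr m A) erefl.
  rewrite (_ : (fun m => V (visits_after m A)) = cst (V (visits_after 0 A))).
    by move=> h; exact: (cvg_unique _ h (cvg_cst _)).
  by apply: funext => m; rewrite /= visits_afterE preserves_iter.
have VI_gt0 : 0 < V (visits_infinitely A).
  rewrite VI; apply: lt_le_trans VA _.
  by apply: (upper_prob_le hV) => // x Ax; exists 0.
have [VI0|VCI] := cond_ii_invariant hii mI (visits_infinitely_invariant A).
  by move: VI_gt0; rewrite VI0 ltxx.
apply: (upper_prob_null_le hV _ (measurableC mI) _ VCI).
  apply/measurableC/bigcup_measurable => k _.
  exact: measurable_preimage_iter.
apply: subsetC => x /(_ 1 I) [n _ Anx].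
by exists n.+1 => //; rewrite -addn1.
Qed.

End ergodicity.

Theorem theorem4 (d : measure_display) (T : measurableType d) (R : realType)
  (V : set T -> R) (theta : T -> T) :
  upper_probability V -> cont_from_below V ->
  measurable_fun setT theta -> preserves theta V ->
  ((ergodic theta V <-> cond_ii theta V) /\
   (cond_iii theta V -> cond_iv theta V) /\
   (cond_iv theta V -> ergodic theta V) /\
   (continuous_capacity V -> cond_ii theta V -> cond_iii theta V)).
Proof.
move=> hV Vbelow mtheta Vtheta.
split; [split|split; [|split]].
- exact: ergodic_cond_ii.
- exact: cond_ii_ergodic.
- exact: cond_iii_iv.
- exact: cond_iv_ergodic.
- by move=> [_ Vabove]; exact: cond_ii_iii.
Qed.
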